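(* Let $X$ be a compact metric space and $F\colon X\to 2^X$ a set-valued mapping with the specification property. Then the set-valued map $\gamma\colon\varprojlim F\to 2^{\varprojlim F}$ has the specification property.
   Context: $d$ is the metric on $X$; $2^Y$ is the space of nonempty closed subsets of $Y$; a set-valued mapping is an upper semicontinuous $F\colon X\to 2^X$. The inverse limit is $\varprojlim F=\{(x_0,x_1,\dots)\in X^{\mathbb{N}}: x_i\in F(x_{i+1})\text{ for all } i\}$ with the product topology (and any compatible metric). $\gamma$ is defined by $\gamma((x_0,x_1,\dots))=\{(x_{-1},x_0,x_1,\dots): x_{-1}\in F(x_0)\}$. For a set-valued map $G$ on a compact metric space $(Y,\rho)$, an orbit of $y$ is a sequence $(y_j)_{j=0}^\infty$ with $y_0=y$, $y_{j+1}\in G(y_j)$, and $G$ has the specification property if for every $\epsilon>0$ there is $M\in\mathbb{N}$ such that for any $n$, any $y^1,\dots,y^n\in Y$, any integers $0\le a_1\le b_1<a_2\le\dots<a_n\le b_n$ with $a_{i+1}-b_i>M$, any orbits $(y^i_j)_{j=0}^\infty$ of the $y^i$, and any $P>M+b_n-a_1$, there is $z\in Y$ with an orbit $(z_j)_{j=0}^\infty$ such that $\rho(z_j,y^i_j)<\epsilon$ for $1\le i\le n$, $a_i\le j\le b_i$, and $z_P=z$. *)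

From Stdlib Require Import Reals List.
Open Scope R_scope.

Definition is_metric_on {Y : Type} (A : Y -> Prop) (d : Y -> Y -> R) : Prop :=
  (forall x y, A x -> A y -> 0 <= d x y) /\
  (forall x y, A x -> A y -> (d x y = 0 <-> x = y)) /\
  (forall x y, A x -> A y -> d x y = d y x) /\
  (forall x y z, A x -> A y -> A z -> d x z <= d x y + d y z).

Definition is_metric {Y : Type} (d : Y -> Y -> R) : Prop :=
  is_metric_on (fun _ => True) d.

Definition open_in {Y : Type} (A : Y -> Prop) (d : Y -> Y -> R) (U : Y -> Prop) : Prop :=
  forall x, A x -> U x ->
    exists eps, eps > 0 /\ forall y, A y -> d x y < eps -> U y.

Definition is_open {Y : Type} (d : Y -> Y -> R) (U : Y -> Prop) : Prop :=
  open_in (fun _ => True) d U.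

Definition is_closed {Y : Type} (d : Y -> Y -> R) (C : Y -> Prop) : Prop :=
  is_open d (fun y => ~ C y).

Definition compact_metric {Y : Type} (d : Y -> Y -> R) : Prop :=
  forall (I : Type) (U : I -> Y -> Prop),
    (forall i, is_open d (U i)) ->
    (forall y, exists i, U i y) ->
    exists l : list I, forall y, exists i, In i l /\ U i y.

(* Set-valued maps are encoded as relations: F x y  means  y \in F(x). *)
Definition set_valued_usc {X : Type} (d : X -> X -> R) (F : X -> X -> Prop) : Prop :=
  (forall x, exists y, F x y) /\
  (forall x, is_closed d (F x)) /\
  (forall x (U : X -> Prop), is_open d U -> (forall y, F x y -> U y) ->
     exists V : X -> Prop, is_open d V /\ V x /\
       forall x' y, V x' -> F x' y -> U y).

Definition invlim {X : Type} (F : X -> X -> Prop) (x : nat -> X) : Prop :=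
  forall i, F (x (S i)) (x i).

(* gamma(x) = {(x_{-1}, x_0, x_1, ...) : x_{-1} \in F(x_0)}, shifted indices. *)
Definition gamma {X : Type} (F : X -> X -> Prop) (x y : nat -> X) : Prop :=
  F (x 0%nat) (y 0%nat) /\ forall k, y (S k) = x k.

Definition prod_open_in {X : Type} (A : (nat -> X) -> Prop) (d : X -> X -> R)
  (U : (nat -> X) -> Prop) : Prop :=
  forall x, A x -> U x ->
    exists (N : nat) (eps : R), eps > 0 /\
      forall y, A y -> (forall i, (i <= N)%nat -> d (x i) (y i) < eps) -> U y.

Definition compatible_invlim_metric {X : Type} (d : X -> X -> R)
  (F : X -> X -> Prop) (rho : (nat -> X) -> (nat -> X) -> R) : Prop :=
  is_metric_on (invlim F) rho /\
  forall U : (nat -> X) -> Prop,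
    open_in (invlim F) rho U <-> prod_open_in (invlim F) d U.

Definition orbit {Y : Type} (A : Y -> Prop) (G : Y -> Y -> Prop) (z : nat -> Y) : Prop :=
  forall j, A (z j) /\ G (z j) (z (S j)).

(* Specification property of G on the metric space (A, rho).
   Points y^1..y^n are ys 1 .. ys n, orbits are orb 1 .. orb n. *)
Definition spec_prop {Y : Type} (A : Y -> Prop) (rho : Y -> Y -> R)
  (G : Y -> Y -> Prop) : Prop :=
  forall eps, eps > 0 ->
  exists M : nat,
  forall (n : nat) (ys : nat -> Y) (a b : nat -> nat) (orb : nat -> nat -> Y) (P : nat),
    (1 <= n)%nat ->
    (forall i, (1 <= i <= n)%nat -> A (ys i)) ->
    (forall i, (1 <= i <= n)%nat -> (a i <= b i)%nat) ->
    (forall i, (1 <= i < n)%nat -> (b i + M < a (S i))%nat) ->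
    (forall i, (1 <= i <= n)%nat -> orbit A G (orb i) /\ orb i 0%nat = ys i) ->
    (M + b n < P + a 1%nat)%nat ->
    exists (z : Y) (zs : nat -> Y),
      A z /\ orbit A G zs /\ zs 0%nat = z /\
      (forall i j, (1 <= i <= n)%nat -> (a i <= j <= b i)%nat ->
         rho (zs j) (orb i j) < eps) /\
      zs P = z.

From Stdlib Require Import Reals List Lra Lia Classical ClassicalEpsilon FunctionalExtensionality.
Open Scope R_scope.

(* Since rho is compatible with the product topology and the inverse limit is
   compact, rho-closeness is uniformly controlled by d-closeness of finitely many
   coordinates 0 .. N. Along a gamma-orbit, coordinate k at time j equals
   coordinate N at time j + N - k, and the N-th coordinates form an F-orbit. So it
   suffices to shadow the N-th coordinates of the given gamma-orbits, on their
   windows thickened by N, by a periodic F-orbit from the specification property of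
   F (whence the gap M + N for gamma); that periodic orbit, read backwards, is a
   periodic gamma-orbit. *)

Section MetricSpace.

Context {X : Type} (d : X -> X -> R).
Hypothesis d_metric : is_metric d.

Lemma dist_refl x : d x x = 0.
Proof. destruct d_metric as (_ & Hd & _). now apply (Hd x x I I). Qed.

Lemma dist_sym x y : d x y = d y x.
Proof. destruct d_metric as (_ & _ & Hd & _). now apply Hd. Qed.

Lemma dist_triangle x y z : d x z <= d x y + d y z.
Proof. destruct d_metric as (_ & _ & _ & Hd). now apply Hd. Qed.

Definition converges (u : nat -> X) (p : X) : Prop :=
  forall r, r > 0 -> exists K, forall n, (K <= n)%nat -> d (u n) p < r.

Hypothesis d_compact : compact_metric d.

(* Otherwise the balls B(c, r) that s eventually avoids cover X, and the largest
   of the finitely many thresholds m of a subcover gives a term of s outside it. *)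
Lemma compact_cluster_point (s : nat -> X) :
  exists c, forall r, r > 0 -> forall m, exists n, (m <= n)%nat /\ d (s n) c < r.
Proof.
  apply NNPP; intro Hnone.
  pose (U := fun (t : X * R * nat) y =>
    let '(c, r, m) := t in r > 0 /\ (forall n, (m <= n)%nat -> r <= d (s n) c) /\ d c y < r).
  destruct (d_compact _ U) as [l Hl].
  - intros [[c r] m] y _ (Hr & Hfar & Hy).
    exists (r - d c y); split; [lra|].
    intros z _ Hz; repeat split; auto.
    pose proof (dist_triangle c y z); lra.
  - intro y. apply NNPP; intro Hy. apply Hnone. exists y. intros r Hr m.
    apply NNPP; intro Hm. apply Hy. exists (y, r, m). repeat split; auto.
    + intros n Hn. apply Rnot_lt_le; intro Hlt. apply Hm. now exists n.
    + now rewrite dist_refl.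
  - set (mx := list_max (map snd l)).
    destruct (Hl (s mx)) as ([[c r] m] & Hin & Hr & Hfar & Hc).
    assert (Hm : (m <= mx)%nat).
    { apply (proj1 (Forall_forall _ _) (proj1 (list_max_le _ mx) (Nat.le_refl _))).
      now apply (in_map snd) in Hin. }
    specialize (Hfar mx Hm). rewrite dist_sym in Hc. lra.
Qed.

Lemma compact_convergent_subsequence (s : nat -> X) :
  exists (phi : nat -> nat) c,
    (forall n, (phi n < phi (S n))%nat) /\ converges (fun k => s (phi k)) c.
Proof.
  destruct (compact_cluster_point s) as [c Hc].
  assert (Hpos : forall k, / INR (S k) > 0).
  { intro k. apply Rinv_0_lt_compat, lt_0_INR. lia. }
  destruct (choice (fun (km : nat * nat) n =>
      (snd km <= n)%nat /\ d (s n) c < / INR (S (fst km))))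
    as [pick Hpick].
  { intros [k m]. apply (Hc _ (Hpos k)). }
  pose (phi := fix phi k := match k with
               | O => pick (0, 0)%nat
               | S k' => pick (k, S (phi k'))
               end).
  assert (Hphi : forall k, d (s (phi k)) c < / INR (S k)).
  { intros [|k]; apply (Hpick (_, _)). }
  exists phi, c. split.
  - intro n. apply (Hpick (S n, S (phi n))).
  - intros r Hr. destruct (archimed_cor1 r Hr) as (N & HN & HN0).
    exists N. intros n Hn.
    apply (Rlt_trans _ _ _ (Hphi n)), (Rle_lt_trans _ (/ INR N)); [|exact HN].
    apply Rinv_le_contravar; [now apply lt_0_INR|]. apply le_INR. lia.
Qed.

Lemma strictly_increasing_inflationary (phi : nat -> nat) :
  (forall n, (phi n < phi (S n))%nat) -> forall n, (n <= phi n)%nat.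
Proof. intros Hphi n. induction n; [lia|]. specialize (Hphi n). lia. Qed.

(* The k-th nested subsequence [nested k] makes coordinates [0 .. k-1] converge;
   the diagonal [n |-> nested (S n) n] is, from index i on, a subsequence of
   [nested (S i)]. *)
Lemma compact_diagonal_subsequence (x : nat -> nat -> X) :
  exists (psi : nat -> nat) (c : nat -> X),
    (forall n, (n <= psi n)%nat) /\ forall i, converges (fun n => x (psi n) i) (c i).
Proof.
  destruct (choice (fun (s : nat -> X) (pc : (nat -> nat) * X) =>
      (forall n, (fst pc n < fst pc (S n))%nat) /\ converges (fun k => s (fst pc k)) (snd pc)))
    as [sub Hsub].
  { intro s. destruct (compact_convergent_subsequence s) as (phi & c & H). now exists (phi, c). }
  pose (nested := fix nested k := match k with
                  | O => fun n : nat => n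
                  | S k' => fun n => nested k' (fst (sub (fun m => x (nested k' m) k')) n)
                  end).
  assert (Hfactor : forall j k, exists h : nat -> nat,
             (forall m, (m <= h m)%nat) /\ forall m, nested (j + k)%nat m = nested k (h m)).
  { intros j k. induction j as [|j (h & Hh & Hnest)].
    - now exists (fun m => m).
    - set (phi := fst (sub (fun m => x (nested (j + k)%nat m) (j + k)%nat))).
      pose proof (strictly_increasing_inflationary phi (proj1 (Hsub _))) as Hphi.
      exists (fun m => h (phi m)). split.
      + intro m. specialize (Hh (phi m)). specialize (Hphi m). lia.
      + intro m. apply Hnest. }
  exists (fun n => nested (S n) n), (fun i => snd (sub (fun m => x (nested i m) i))).
  split.
  - intro n. destruct (Hfactor (S n) 0%nat) as (h & Hh & Hnest).
    rewrite Nat.add_0_r in Hnest. rewrite Hnest. apply Hh.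
  - intros i r Hr. destruct (proj2 (Hsub (fun m => x (nested i m) i)) r Hr) as [K HK].
    exists (Nat.max K i). intros n Hn.
    destruct (Hfactor (n - i)%nat (S i)) as (h & Hh & Hnest).
    replace (S n) with (n - i + S i)%nat by lia. rewrite Hnest.
    apply HK. specialize (Hh n). lia.
Qed.

End MetricSpace.

Section UpperSemicontinuous.

Context {X : Type} (d : X -> X -> R) (F : X -> X -> Prop).
Hypotheses (d_metric : is_metric d) (F_usc : set_valued_usc d F).

(* If q were outside the closed set F p, upper semicontinuity at p would keep
   F u_n away from a neighbourhood of q for u_n near p. *)
Lemma usc_closed_graph u v p q :
  converges d u p -> converges d v q -> (forall n, F (u n) (v n)) -> F p q.
Proof.
  destruct F_usc as (_ & Hclosed & Husc).
  intros Hu Hv HF. apply NNPP; intro Hpq.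
  destruct (Hclosed p q I Hpq) as (eps & Heps & Hball).
  destruct (Husc p (fun y => eps / 2 < d q y)) as (V & HVopen & HVp & HV).
  - intros y _ Hy. exists (d q y - eps / 2). split; [lra|].
    intros z _ Hz. pose proof (dist_triangle d d_metric q z y).
    rewrite (dist_sym d d_metric z y) in *. lra.
  - intros y Hy. apply Rnot_le_lt; intro Hle. apply (Hball y I); auto. lra.
  - destruct (HVopen p I HVp) as (del & Hdel & HVball).
    destruct (Hu del Hdel) as [K1 HK1]. destruct (Hv (eps / 2) ltac:(lra)) as [K2 HK2].
    set (n := Nat.max K1 K2).
    assert (HVn : V (u n)).
    { apply HVball; [exact I|]. rewrite (dist_sym d d_metric). apply HK1. lia. }
    specialize (HV _ _ HVn (HF n)). specialize (HK2 n ltac:(lia)).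
    rewrite (dist_sym d d_metric) in HV. lra.
Qed.

End UpperSemicontinuous.

Lemma eventually_forall_le (P : nat -> nat -> Prop) :
  (forall i, exists K, forall n, (K <= n)%nat -> P i n) ->
  forall N, exists K, forall n, (K <= n)%nat -> forall i, (i <= N)%nat -> P i n.
Proof.
  intros HP N. induction N as [|N [K HK]].
  - destruct (HP 0%nat) as [K HK]. exists K. intros n Hn i Hi.
    replace i with 0%nat by lia. auto.
  - destruct (HP (S N)) as [K' HK']. exists (Nat.max K K'). intros n Hn i Hi.
    destruct (Nat.eq_dec i (S N)) as [->|]; [apply HK'|apply HK]; lia.
Qed.

Section InverseLimit.

Context {X : Type} (d : X -> X -> R) (F : X -> X -> Prop).
Variable rho : (nat -> X) -> (nat -> X) -> R.
Hypotheses (d_metric : is_metric d) (d_compact : compact_metric d).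
Hypotheses (F_usc : set_valued_usc d F) (rho_compatible : compatible_invlim_metric d F rho).

Lemma invlim_closed (x : nat -> nat -> X) (c : nat -> X) :
  (forall n, invlim F (x n)) -> (forall i, converges d (fun n => x n i) (c i)) -> invlim F c.
Proof.
  intros Hx Hc i.
  apply (usc_closed_graph d F d_metric F_usc (fun n => x n (S i)) (fun n => x n i)); auto.
  intro n. apply Hx.
Qed.

Lemma rho_ball_contains_cylinder c r :
  invlim F c -> r > 0 ->
  exists N e, e > 0 /\ forall y, invlim F y ->
    (forall i, (i <= N)%nat -> d (c i) (y i) < e) -> rho c y < r.
Proof.
  destruct rho_compatible as ((_ & Hzero & _ & Htri) & Hopen).
  intros Hc Hr.
  assert (Hball : open_in (invlim F) rho (fun y => rho c y < r)).
  { intros y Hy Hcy. exists (r - rho c y). split; [lra|].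
    intros z Hz Hyz. pose proof (Htri c y z Hc Hy Hz). lra. }
  assert (Hcc : rho c c < r) by (rewrite (proj2 (Hzero c c Hc Hc) eq_refl); lra).
  exact (proj1 (Hopen _) Hball c Hc Hcc).
Qed.

(* By compactness of the inverse limit: pairs agreeing ever better on ever more
   coordinates but rho-far apart would, along a diagonal subsequence, converge to a
   common limit c, and both would enter the rho-ball of radius eps/2 around c. *)
Lemma invlim_coordinate_control eps :
  eps > 0 ->
  exists N e, e > 0 /\ forall x y, invlim F x -> invlim F y ->
    (forall i, (i <= N)%nat -> d (x i) (y i) < e) -> rho x y < eps.
Proof.
  destruct rho_compatible as ((_ & _ & Hsym & Htri) & _).
  intros Heps. apply NNPP; intro Hnone.
  assert (Hbad : forall N, exists xy : (nat -> X) * (nat -> X),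
    invlim F (fst xy) /\ invlim F (snd xy) /\
    (forall i, (i <= N)%nat -> d (fst xy i) (snd xy i) < / INR (S N)) /\
    eps <= rho (fst xy) (snd xy)).
  { intro N. apply NNPP; intro HN. apply Hnone. exists N, (/ INR (S N)). split.
    - apply Rinv_0_lt_compat, lt_0_INR. lia.
    - intros x y Hx Hy Hxy. apply Rnot_le_lt; intro Hle. apply HN. now exists (x, y). }
  destruct (choice _ Hbad) as [xy Hxy].
  destruct (compact_diagonal_subsequence d d_metric d_compact (fun N => fst (xy N)))
    as (psi & c & Hpsi & Hconv).
  assert (Hc : invlim F c).
  { apply (invlim_closed (fun n => fst (xy (psi n)))); [|exact Hconv].
    intro n. apply Hxy. }
  destruct (rho_ball_contains_cylinder c (eps / 2) Hc ltac:(lra)) as (N & e & He & Hcyl).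
  destruct (eventually_forall_le (fun i n => d (fst (xy (psi n)) i) (c i) < e / 2)
              (fun i => Hconv i (e / 2) ltac:(lra)) N) as [K HK].
  destruct (archimed_cor1 (e / 2) ltac:(lra)) as (m & Hm & Hm0).
  set (n := Nat.max K (Nat.max N m)).
  specialize (Hpsi n). specialize (HK n ltac:(lia)).
  destruct (Hxy (psi n)) as (Hx & Hy & Hclose & Hfar).
  assert (Hsmall : / INR (S (psi n)) <= / INR m).
  { apply Rinv_le_contravar; [now apply lt_0_INR|]. apply le_INR. lia. }
  assert (Hcx : rho c (fst (xy (psi n))) < eps / 2).
  { apply Hcyl; [exact Hx|]. intros i Hi. specialize (HK i Hi).
    rewrite (dist_sym d d_metric). lra. }
  assert (Hcy : rho c (snd (xy (psi n))) < eps / 2).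
  { apply Hcyl; [exact Hy|]. intros i Hi. specialize (HK i Hi).
    specialize (Hclose i ltac:(lia)).
    pose proof (dist_triangle d d_metric (c i) (fst (xy (psi n)) i) (snd (xy (psi n)) i)).
    rewrite (dist_sym d d_metric (fst _ i)) in HK. lra. }
  pose proof (Htri _ c _ Hx Hc Hy). rewrite (Hsym _ c Hx Hc) in *. lra.
Qed.

End InverseLimit.

Section GammaOrbits.

Context {X : Type} (F : X -> X -> Prop).

Lemma gamma_orbit_coordinate (o : nat -> nat -> X) :
  orbit (invlim F) (gamma F) o -> forall j k, F (o j k) (o (S j) k).
Proof.
  intros Ho j k. destruct (Ho (S j)) as [Hinv _]. specialize (Hinv k).
  now rewrite (proj2 (proj2 (Ho j)) k) in Hinv.
Qed.

Lemma gamma_orbit_shift (A : (nat -> X) -> Prop) (o : nat -> nat -> X) j k j' k' :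
  orbit A (gamma F) o -> (k <= k')%nat -> (j + k' = j' + k)%nat -> o j' k' = o j k.
Proof.
  intros Ho Hk Hjk.
  destruct (Nat.le_exists_sub k k' Hk) as (t & -> & _).
  replace j' with (j + t)%nat by lia. rewrite (Nat.add_comm t k).
  clear Hk Hjk. induction t as [|t IH].
  - now rewrite !Nat.add_0_r.
  - rewrite !Nat.add_succ_r. now rewrite (proj2 (proj2 (Ho _))).
Qed.

Lemma periodic_extension_orbit (w : nat -> X) P :
  (0 < P)%nat -> (forall j, F (w j) (w (S j))) -> w P = w 0%nat ->
  forall m, F (w (m mod P)) (w (S m mod P)).
Proof.
  intros HP Hw Hper m.
  assert (Hsucc : (S m mod P = S (m mod P) mod P)%nat).
  { rewrite <- (Nat.add_1_r m), <- (Nat.add_1_r (m mod P)).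
    now rewrite Nat.Div0.add_mod_idemp_l. }
  pose proof (Nat.mod_upper_bound m P ltac:(lia)) as Hr.
  rewrite Hsucc. destruct (Nat.lt_ge_cases (S (m mod P)) P) as [Hlt|Hge].
  - rewrite (Nat.mod_small (S (m mod P))) by exact Hlt. apply Hw.
  - replace (S (m mod P)) with P by lia.
    rewrite Nat.Div0.mod_same, <- Hper. replace P with (S (m mod P)) at 2 by lia. apply Hw.
Qed.

Lemma periodic_gamma_orbit (w : nat -> X) P s t :
  (0 < P)%nat -> (forall j, F (w j) (w (S j))) -> w P = w 0%nat ->
  exists zs : nat -> nat -> X,
    orbit (invlim F) (gamma F) zs /\ zs P = zs 0%nat /\
    forall j k m, (m < P)%nat -> (j + s = m + k + t)%nat -> zs j k = w m.
Proof.
  intros HP Hw Hper.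
  pose proof (periodic_extension_orbit w P HP Hw Hper) as HW.
  assert (Hperiod : forall m q, w ((m + q * P) mod P) = w (m mod P)).
  { intros m q. now rewrite Nat.Div0.mod_add. }
  destruct P as [|Q]; [lia|].
  (* [(t + k) * Q] is [- (t + k)] modulo [S Q], written without subtraction. *)
  exists (fun j k => w ((s + j + (t + k) * Q) mod S Q)). split; [intro j; split; [|split]|split].
  - intro k. rewrite <- (Hperiod (s + j + (t + k) * Q) 1)%nat.
    replace (s + j + (t + k) * Q + 1 * S Q)%nat with (S (s + j + (t + S k) * Q)) by ring.
    apply HW.
  - replace (s + S j + (t + 0) * Q)%nat with (S (s + j + (t + 0) * Q)) by ring. apply HW.
  - intro k.
    replace (s + S j + (t + S k) * Q)%nat with (s + j + (t + k) * Q + 1 * S Q)%nat by ring.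
    apply Hperiod.
  - apply functional_extensionality. intro k.
    replace (s + S Q + (t + k) * Q)%nat with (s + 0 + (t + k) * Q + 1 * S Q)%nat by ring.
    apply Hperiod.
  - intros j k m Hm Hjs.
    replace (s + j + (t + k) * Q)%nat with (m + (t + k) * S Q)%nat
      by (rewrite Nat.mul_succ_r; set (p := ((t + k) * Q)%nat); lia).
    now rewrite Nat.Div0.mod_add, Nat.mod_small.
Qed.

End GammaOrbits.

Lemma spec_windows_ordered (a b : nat -> nat) n M :
  (forall i, (1 <= i <= n)%nat -> (a i <= b i)%nat) ->
  (forall i, (1 <= i < n)%nat -> (b i + M < a (S i))%nat) ->
  forall i, (1 <= i <= n)%nat -> (a 1 <= a i /\ b i <= b n)%nat.
Proof.
  intros Hab Hgap.
  assert (Hmono : forall i k, (1 <= i)%nat -> (i + k <= n)%nat ->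
                    (a i <= a (i + k) /\ b i <= b (i + k))%nat).
  { intros i k Hi. induction k as [|k IH]; intros Hk; [rewrite Nat.add_0_r; lia|].
    rewrite Nat.add_succ_r. specialize (IH ltac:(lia)).
    pose proof (Hab (i + k)%nat ltac:(lia)). pose proof (Hgap (i + k)%nat ltac:(lia)).
    pose proof (Hab (S (i + k)) ltac:(lia)). lia. }
  intros i Hi. split.
  - destruct (Hmono 1%nat (i - 1)%nat) as [Ha _]; [lia|lia|].
    now replace (1 + (i - 1))%nat with i in Ha by lia.
  - destruct (Hmono i (n - i)%nat) as [_ Hb]; [lia|lia|].
    now replace (i + (n - i))%nat with n in Hb by lia.
Qed.

Theorem corollary10 (X : Type) (d : X -> X -> R) (F : X -> X -> Prop)
  (rho : (nat -> X) -> (nat -> X) -> R) :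
  is_metric d -> compact_metric d -> set_valued_usc d F ->
  spec_prop (fun _ => True) d F ->
  compatible_invlim_metric d F rho ->
  spec_prop (invlim F) rho (gamma F).
Proof.
  intros Hd Hcompact Husc Hspec Hrho eps Heps.
  destruct (invlim_coordinate_control d F rho Hd Hcompact Husc Hrho eps Heps)
    as (N & e & He & Hcontrol).
  destruct (Hspec e He) as [M HM].
  exists (M + N)%nat.
  intros n ys a b orb P Hn _ Hab Hgap Horb HP.
  pose proof (spec_windows_ordered a b n (M + N) Hab Hgap) as Hord.
  pose proof (Hord n ltac:(lia)). pose proof (Hab n ltac:(lia)).
  (* Shifting time by [a 1] puts all windows thickened by N inside the period [0, P). *)
  pose (v := fun i m => orb i (a 1%nat + m)%nat N).
  destruct (HM n (fun i => v i 0%nat) (fun i => a i - a 1%nat)%nat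
              (fun i => b i + N - a 1%nat)%nat v P)
    as (w0 & w & _ & Hw & <- & Hclose & HwP).
  - exact Hn.
  - intros; exact I.
  - intros i Hi. pose proof (Hab i Hi). lia.
  - intros i Hi. pose proof (Hgap i Hi). pose proof (Hord i ltac:(lia)).
    pose proof (Hab i ltac:(lia)). lia.
  - intros i Hi. split; [intro j; split; [exact I|] | reflexivity].
    unfold v. rewrite Nat.add_succ_r. apply (gamma_orbit_coordinate F), Horb, Hi.
  - lia.
  - destruct (periodic_gamma_orbit F w P N (a 1%nat) ltac:(lia) (fun j => proj2 (Hw j)) HwP)
      as (zs & Hzs & HzsP & Hzs_w).
    exists (zs 0%nat), zs.
    split; [apply Hzs|]. split; [exact Hzs|]. split; [reflexivity|]. split; [|exact HzsP].
    intros i j Hi Hj. pose proof (Hord i Hi).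
    apply Hcontrol; [apply Hzs | apply Horb, Hi |]. intros k Hk.
    set (m := (j + N - k - a 1%nat)%nat).
    rewrite (Hzs_w j k m) by lia.
    rewrite <- (gamma_orbit_shift F _ (orb i) j k (a 1%nat + m) N (proj1 (Horb i Hi)))
      by lia.
    apply Hclose; lia.
Qed.
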